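(* Every element $h\in S\mathcal V_G$ can be written as $h=f_2^{-1}\,t\,f_1$ for some multicolored forests $f_1,f_2$ and some $G$-twist $t$ (of $\mathfrak C^S(k)$, where $k$ is the common rank of $f_1$ and $f_2$). Moreover, for such a decomposition, $h\in S\mathcal V$ if and only if $t$ is the identity.
   Context: Let $\mathfrak C=\{0,1\}^{\omega}$, $S$ a nonempty set, $G$ a subgroup of the symmetric group of $S$, and $\mathfrak C^S$ the space of functions $S\to\mathfrak C$. For $\psi\colon S\to\{0,1\}^*$ with $\psi(s)=\varnothing$ for all but finitely many $s$, the dyadic brick $B(\psi)$ is the set of $\kappa\in\mathfrak C^S$ with $\psi(s)$ a prefix of $\kappa(s)$ for all $s$; $\Phi_\psi(\kappa)(s)=\psi(s)\cdot\kappa(s)$ is the canonical homeomorphism $\mathfrak C^S\to B(\psi)$; for $\gamma\in G$, $\tau_\gamma(\kappa)(s)=\kappa(\gamma^{-1}s)$, and the twist homeomorphism $B(\varphi)\to B(\psi)$ associated to $\gamma$ is $\Phi_\psi\tau_\gamma\Phi_\varphi^{-1}$. For $m\ge1$, let $\mathfrak C^S(m)=\mathfrak C^S_1\sqcup\dots\sqcup\mathfrak C^S_m$ be a disjoint union of $m$ copies of $\mathfrak C^S$, with $\mathfrak C^S(1)=\mathfrak C^S$. A dyadic brick in $\mathfrak C^S(m)$ is a dyadic brick in one of the cubes; canonical and twist homeomorphisms between bricks in possibly different cubes are defined via the identifications of each cube with $\mathfrak C^S$. $S\mathcal V_G$ is the set of homeomorphisms $h\colon\mathfrak C^S(m)\to\mathfrak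 C^S(n)$ ($m,n\ge1$) for which there are partitions of $\mathfrak C^S(m)$ and $\mathfrak C^S(n)$ into the same number of dyadic bricks $B_i$, $B_i'$ and $\gamma_i\in G$ such that $h$ maps each $B_i$ to $B_i'$ by the twist homeomorphism associated to $\gamma_i$; $S\mathcal V$ is the subset where all $\gamma_i$ may be taken trivial. The number $n$ is the rank of $h$ and $m$ its corank. The direct sum of $h\colon\mathfrak C^S(m)\to\mathfrak C^S(n)$ and $h'\colon\mathfrak C^S(m')\to\mathfrak C^S(n')$ is $h\oplus h'\colon\mathfrak C^S(m+m')\to\mathfrak C^S(n+n')$, acting as $h$ from the first $m$ cubes to the first $n$ cubes and as $h'$ from the remaining $m'$ cubes to the remaining $n'$ cubes. A $G$-twist of $\mathfrak C^S(n)$ is a map $\tau_{\gamma_1}\oplus\dots\oplus\tau_{\gamma_n}$ with $\gamma_i\in G$. A very elementary expansion of a partition $\mathcal P$ of $\mathfrak C^S(m)$ into dyadic bricks is a partition $\mathcal P'$ into dyadic bricks such that every brick of $\mathcal P$ is a union of at most two bricks of $\mathcal P'$; a dyadic partition of $\mathfrak C^S(m)$ is one obtained from $\{\mathfrak C^S_1,\dots,\mathfrak C^S_m\}$ by finitely many very elementary expansions. A multicolored forest is a homeomorphism $f\colon\mathfrak C^S(m)\to\mathfrak C^S(n)$ that maps the bricks $B_1,\dots,B_n$ of some dyadic partition of $\mathfrak C^S(m)$ onto $\mathfrak C^S_1,\dots,\mathfrak C^S_n$ respectively by canonical homeomorphisms. *)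

From Stdlib Require List.
From mathcomp Require Import all_boot.
Set Implicit Arguments. Unset Strict Implicit. Unset Printing Implicit Defensive.

(* Cantor space C = {0,1}^omega as nat -> bool; words {0,1}^* as seq bool. *)
Definition cantor := nat -> bool.

Record sperm (S : Type) := SPerm {
  pfun : S -> S; pinv : S -> S;
  pfunK : cancel pfun pinv; pinvK : cancel pinv pfun }.

Definition is_subgroup (S : Type) (G : sperm S -> Prop) : Prop :=
  (exists e, G e /\ forall s, pfun e s = s) /\
  (forall a b, G a -> G b -> exists c, G c /\ forall s, pfun c s = pfun a (pfun b s)) /\
  (forall a, G a -> exists c, G c /\ forall s, pfun c s = pinv a s).

Definition prefix (w : seq bool) (c : cantor) : Prop :=
  forall i, i < size w -> c i = nth false w i.
Definition wconcat (w : seq bool) (c : cantor) : cantor :=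
  fun i => if i < size w then nth false w i else c (i - size w).
(* inverse of c |-> w . c on sequences with prefix w *)
Definition wunprefix (w : seq bool) (c : cantor) : cantor :=
  fun i => c (i + size w).

(* Points of C^S(m) = C^S_1 ⊔ ... ⊔ C^S_m *)
Definition pt (S : Type) (m : nat) := ('I_m * (S -> cantor))%type.

Record brick (S : Type) (m : nat) := Brick { bcube : 'I_m; bword : S -> seq bool }.

Definition finsupp (S : Type) (psi : S -> seq bool) : Prop :=
  exists L : list S, forall s, ~ List.In s L -> psi s = [::].

Definition inb (S : Type) (m : nat) (B : brick S m) (x : pt S m) : Prop :=
  x.1 = bcube B /\ forall s, prefix (bword B s) (x.2 s).

Definition Phi (S : Type) (psi : S -> seq bool) (k : S -> cantor) : S -> cantor :=
  fun s => wconcat (psi s) (k s).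
Definition Phiinv (S : Type) (psi : S -> seq bool) (k : S -> cantor) : S -> cantor :=
  fun s => wunprefix (psi s) (k s).

Definition tau (S : Type) (g : sperm S) (k : S -> cantor) : S -> cantor :=
  fun s => k (pinv g s).

Definition twist (S : Type) (m n : nat) (B : brick S m) (B' : brick S n) (g : sperm S)
  (x : pt S m) : pt S n :=
  (bcube B', Phi (bword B') (tau g (Phiinv (bword B) x.2))).

Definition is_partition (S : Type) (m k : nat) (B : 'I_k -> brick S m) : Prop :=
  (forall i, finsupp (bword (B i))) /\ forall x : pt S m, exists! i, inb (B i) x.

Definition SVG (S : Type) (G : sperm S -> Prop) (m n : nat) (h : pt S m -> pt S n) : Prop :=
  exists k (B : 'I_k -> brick S m) (B' : 'I_k -> brick S n) (g : 'I_k -> sperm S),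
    is_partition B /\ is_partition B' /\ (forall i, G (g i)) /\
    forall i x, inb (B i) x -> h x = twist (B i) (B' i) (g i) x.

Definition SV (S : Type) (m n : nat) (h : pt S m -> pt S n) : Prop :=
  SVG (fun g : sperm S => forall s, pfun g s = s) h.

Definition is_Gtwist (S : Type) (G : sperm S -> Prop) (n : nat) (t : pt S n -> pt S n) : Prop :=
  exists g : 'I_n -> sperm S, (forall i, G (g i)) /\
    forall x, t x = (x.1, tau (g x.1) x.2).

Definition very_elem (S : Type) (m k k' : nat) (P : 'I_k -> brick S m) (P' : 'I_k' -> brick S m) : Prop :=
  forall i, exists j1 j2, forall x, inb (P i) x <-> (inb (P' j1) x \/ inb (P' j2) x).

Inductive dyadic (S : Type) (m : nat) : forall k : nat, ('I_k -> brick S m) -> Prop :=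
| dyadic_base : forall B : 'I_m -> brick S m,
    is_partition B -> (forall i x, x.1 = bcube (B i) -> inb (B i) x) -> dyadic B
| dyadic_step : forall k (P : 'I_k -> brick S m) k' (P' : 'I_k' -> brick S m),
    dyadic P -> is_partition P' -> very_elem P P' -> dyadic P'.

Definition forest (S : Type) (m n : nat) (f : pt S m -> pt S n) : Prop :=
  exists B : 'I_n -> brick S m, dyadic B /\
    forall i x, inb (B i) x -> f x = (i, Phiinv (bword (B i)) x.2).

From Pilot Require Import Defs.
From mathcomp Require Import all_boot zify.
From Stdlib Require Import ClassicalEpsilon FunctionalExtensionality.
Set Implicit Arguments. Unset Strict Implicit. Unset Printing Implicit Defensive.

(* Let h twist the bricks B_i onto B'_i.  Cut every cube of the domain into the
   bricks of one fixed shape (prescribed word lengths on finitely many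
   coordinates), deep enough to refine all B_i; repeated halving of single bricks
   shows this partition E is dyadic.  The twists map E onto a partition F of the
   target which refines a dyadic partition D of fixed shape, brick by brick to a
   depth depending only on the brick of D; such a uniform refinement of a dyadic
   partition is again dyadic.  With f1, f2 the forests of E and F and t twisting
   cube j like the brick of B containing E_j, h = f2^-1 t f1.
   Conversely, a map of SV acts locally coordinatewise, while a nontrivial twist
   in t makes coordinate s of h x depend on arbitrarily deep bits of another
   coordinate of x. *)

Definition decide (P : Prop) : bool := is_left (excluded_middle_informative P).

Lemma decideP (P : Prop) : reflect P (decide P).
Proof. by rewrite /decide; case: excluded_middle_informative => h; constructor. Qed.

Lemma decide_refl (T : Type) (a : T) : decide (a = a).
Proof. exact/decideP. Qed.

Lemma In_enum (I : finType) (i : I) : List.In i (enum I).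
Proof.
have : i \in enum I by rewrite mem_enum.
by elim: (enum I) => [//|a s IH] /=; rewrite in_cons => /orP [/eqP ->|/IH]; [left|right].
Qed.

Lemma leq_sum_In (T : Type) (f : T -> nat) (L : seq T) x :
  List.In x L -> f x <= \sum_(y <- L) f y.
Proof.
elim: L => [//|a L IH] /= [->|/IH h]; rewrite big_cons; first exact: leq_addr.
exact: leq_trans h (leq_addl _ _).
Qed.

Lemma ltn_sum_In (T : Type) (f f' : T -> nat) (L : seq T) x :
  (forall y, f y <= f' y) -> f x < f' x -> List.In x L ->
  \sum_(y <- L) f y < \sum_(y <- L) f' y.
Proof.
move=> le_ff' lt_x; elim: L => [//|a L IH] /= [->|/IH h]; rewrite !big_cons.
  by rewrite -addSn leq_add // leq_sum.
by rewrite -addnS leq_add.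
Qed.

Lemma prefix_wconcat w c : Defs.prefix w (wconcat w c).
Proof. by move=> i hi; rewrite /wconcat hi. Qed.

Lemma wconcatK w : cancel (wconcat w) (wunprefix w).
Proof.
move=> c; apply: functional_extensionality => i.
by rewrite /wunprefix /wconcat ltnNge leq_addl /= addnK.
Qed.

Lemma wunprefixK w c : Defs.prefix w c -> wconcat w (wunprefix w c) = c.
Proof.
move=> pre_wc; apply: functional_extensionality => i; rewrite /wunprefix /wconcat.
by case: ifP => [/pre_wc <-|/negbT]; rewrite // -leqNgt => /subnK ->.
Qed.

Lemma prefix_cat a b c :
  Defs.prefix (a ++ b) c <-> Defs.prefix a c /\ Defs.prefix b (wunprefix a c).
Proof.
split=> [pre_abc|[pre_ac pre_bc] i].
  split=> i hi.
    by rewrite pre_abc ?nth_cat ?hi // size_cat ltn_addr.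
  rewrite /wunprefix pre_abc; last by rewrite size_cat addnC ltn_add2l.
  by rewrite nth_cat ltnNge leq_addl addnK.
rewrite size_cat nth_cat; case: ifP => [/pre_ac //|/negbT]; rewrite -leqNgt => le_ai hi.
have := pre_bc (i - size a); rewrite /wunprefix subnK // => -> //.
by rewrite ltn_subLR.
Qed.

Lemma wconcat_cat a b c : wconcat (a ++ b) c = wconcat a (wconcat b c).
Proof.
apply: functional_extensionality => i; rewrite /wconcat size_cat nth_cat.
case: (ltnP i (size a)) => [lt_ia|le_ai]; first by rewrite ltn_addr.
by rewrite ltn_subLR // subnDA.
Qed.

Lemma wunprefix_cat a b c : wunprefix (a ++ b) c = wunprefix b (wunprefix a c).
Proof.
by apply: functional_extensionality => i; rewrite /wunprefix size_cat addnA addnAC.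
Qed.

Lemma prefix_drop a b c : Defs.prefix a c -> Defs.prefix b c -> size a <= size b ->
  a ++ drop (size a) b = b.
Proof.
move=> pre_ac pre_bc le_ab; apply: (eq_from_nth (x0 := false)).
  by rewrite size_cat size_drop subnKC.
move=> i; rewrite size_cat size_drop subnKC // nth_cat => hi.
case: ifP => [lt_ia|/negbT]; first by rewrite -pre_ac // pre_bc.
by rewrite -leqNgt nth_drop => /subnKC ->.
Qed.

Section Bricks.
Variables (S : Type) (m : nat).
Implicit Types (B : brick S m) (x : pt S m).

Definition bext B (u : S -> seq bool) : brick S m :=
  Brick (bcube B) (fun s => bword B s ++ u s).

Definition brick_point B : pt S m := (bcube B, Phi (bword B) (fun _ _ => false)).

Lemma inb_Phi B w : inb B (bcube B, Phi (bword B) w).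
Proof. by split=> // s; apply: prefix_wconcat. Qed.

Lemma inb_brick_point B : inb B (brick_point B).
Proof. exact: inb_Phi. Qed.

Lemma inb_twist n B (B' : brick S n) g x : inb B' (twist B B' g x).
Proof. by split=> // s; apply: prefix_wconcat. Qed.

Lemma PhiK (psi : S -> seq bool) : cancel (Phi psi) (Phiinv psi).
Proof. by move=> w; apply: functional_extensionality => s; rewrite /Phiinv /Phi wconcatK. Qed.

Lemma PhiinvK B x : inb B x -> (bcube B, Phi (bword B) (Phiinv (bword B) x.2)) = x.
Proof.
case: x => c z [/= <- pre_z]; congr pair; apply: functional_extensionality => s.
by rewrite /Phi /Phiinv wunprefixK.
Qed.

Lemma inb_bext B u x : inb (bext B u) x <->
  inb B x /\ forall s, Defs.prefix (u s) (wunprefix (bword B s) (x.2 s)).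
Proof.
split=> [[cube_x pre_x]|[[cube_x pre_B] pre_u]].
  by do ![split] => // s; have /prefix_cat[] := pre_x s.
by split=> // s; apply/prefix_cat.
Qed.

Lemma inb_bext_inb B u x : inb (bext B u) x -> inb B x.
Proof. by case/inb_bext. Qed.

Lemma bext_nil B : bext B (fun _ => [::]) = B.
Proof.
by case: B => c w; congr Brick; apply: functional_extensionality => s; rewrite cats0.
Qed.

Lemma bext_bext B u v : bext (bext B u) v = bext B (fun s => u s ++ v s).
Proof. by congr Brick; apply: functional_extensionality => s; rewrite catA. Qed.

Lemma brick_eq_size B B' x : inb B x -> inb B' x ->
  (forall s, size (bword B s) = size (bword B' s)) -> B = B'.
Proof.
case: B B' => c w [c' w'] [/= <- pre_w] [/= <- pre_w'] eq_size; congr Brick.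
apply: functional_extensionality => s; apply: (eq_from_nth (x0 := false)) => // i lt_i.
by rewrite -pre_w // pre_w' // -eq_size.
Qed.

Lemma brick_bext_size B B' x : inb B x -> inb B' x ->
  (forall s, size (bword B s) <= size (bword B' s)) ->
  B' = bext B (fun s => drop (size (bword B s)) (bword B' s)).
Proof.
case: B B' => c w [c' w'] [/= <- pre_w] [/= <- pre_w'] le_size; congr Brick.
by apply: functional_extensionality => s; rewrite (prefix_drop (pre_w s) (pre_w' s)).
Qed.

Lemma partition_uniq k (P : 'I_k -> brick S m) i j x :
  is_partition P -> inb (P i) x -> inb (P j) x -> i = j.
Proof. by case=> _ /(_ x) [i0 [_ uniq_i0]] /uniq_i0 <- /uniq_i0 <-. Qed.

Definition part_index k (P : 'I_k -> brick S m) (partP : is_partition P) x : 'I_k :=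
  proj1_sig (constructive_indefinite_description _ (proj2 partP x)).

Lemma part_indexP k (P : 'I_k -> brick S m) (partP : is_partition P) x :
  inb (P (part_index partP x)) x.
Proof. by rewrite /part_index; case: constructive_indefinite_description => i [] /=. Qed.

Lemma part_indexE k (P : 'I_k -> brick S m) (partP : is_partition P) i x :
  inb (P i) x -> part_index partP x = i.
Proof. exact: partition_uniq partP (part_indexP partP x). Qed.

Lemma dyadic_partition k (P : 'I_k -> brick S m) : dyadic P -> is_partition P.
Proof. by case. Qed.

Definition cubes : 'I_m -> brick S m := fun i => Brick i (fun _ => [::]).

Lemma inb_cubes i x : inb (cubes i) x <-> x.1 = i.
Proof. by split=> [[]//|cube_x]; split=> // s j; rewrite ltn0. Qed.

Lemma cubes_dyadic : dyadic cubes.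
Proof.
apply: dyadic_base => [|i x /inb_cubes //].
split=> [i|x]; first by exists nil.
by exists x.1; split=> [|j /inb_cubes //]; apply/inb_cubes.
Qed.

End Bricks.

Arguments cubes : clear implicits.

Lemma lift_max_eq k (j : 'I_k) : (lift ord_max j == ord_max :> 'I_k.+1) = false.
Proof. by apply/negbTE; rewrite eq_sym; apply: neq_lift. Qed.

Section SplitBrick.
Variables (S : Type) (m k : nat) (P : 'I_k -> brick S m) (i0 : 'I_k) (s0 : S).

(* Brick [i0] of [P] is halved along coordinate [s0]: its two halves get the
   indices [lift ord_max i0] (next bit false) and [ord_max] (next bit true). *)
Definition split_parent (r : 'I_k.+1) : 'I_k := odflt i0 (unlift ord_max r).

Definition half_word (b : bool) (s : S) : seq bool := if decide (s = s0) then [:: b] else [::].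

Definition split_word (r : 'I_k.+1) : S -> seq bool :=
  if split_parent r == i0 then half_word (r == ord_max) else fun _ => [::].

Definition split_bricks (r : 'I_k.+1) : brick S m :=
  bext (P (split_parent r)) (split_word r).

Lemma split_parent_lift i : split_parent (lift ord_max i) = i.
Proof. by rewrite /split_parent liftK. Qed.

Lemma split_parent_max : split_parent ord_max = i0.
Proof. by rewrite /split_parent unlift_none. Qed.

Lemma split_bricks_lift i :
  split_bricks (lift ord_max i) = if i == i0 then bext (P i0) (half_word false) else P i.
Proof.
rewrite /split_bricks /split_word split_parent_lift.
by case: eqVneq => [->|_]; rewrite ?bext_nil // lift_max_eq.
Qed.

Lemma split_bricks_max : split_bricks ord_max = bext (P i0) (half_word true).
Proof. by rewrite /split_bricks /split_word /split_parent unlift_none /= !eqxx. Qed.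

Definition split_bit (x : pt S m) : bool := x.2 s0 (size (bword (P i0) s0)).

Lemma inb_half b x : inb (bext (P i0) (half_word b)) x <-> inb (P i0) x /\ split_bit x = b.
Proof.
rewrite inb_bext /half_word; split=> [[x_i0 /(_ s0)]|[x_i0 bit_x]].
  by rewrite decide_refl => /(_ 0 isT); rewrite /wunprefix add0n.
by split=> // s; case: decideP => [->|] // [|] // _; rewrite /wunprefix add0n.
Qed.

Definition split_index (i : 'I_k) (x : pt S m) : 'I_k.+1 :=
  if (i == i0) && split_bit x then ord_max else lift ord_max i.

Hypothesis partP : is_partition P.

Lemma inb_split_bricks i x r : inb (P i) x ->
  inb (split_bricks r) x <-> r = split_index i x.
Proof.
move=> x_i; rewrite /split_index.
case: (unliftP ord_max r) => [j ->|->]; rewrite ?split_bricks_lift ?split_bricks_max.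
- case: eqVneq => [-> | ne_j]; last first.
    split=> [x_j|]; first by rewrite (partition_uniq partP x_j x_i) in ne_j *; rewrite (negbTE ne_j).
    by case: ifP => _ /eqP; rewrite ?lift_max_eq // (inj_eq lift_inj) => /eqP ->.
  rewrite inb_half; split=> [[x_i0 ->]|].
    by rewrite andbF (partition_uniq partP x_i0 x_i).
  case: ifP => [_ /eqP|bit_x /lift_inj ei]; first by rewrite lift_max_eq.
  by subst i; rewrite eqxx /= in bit_x.
- rewrite inb_half; split=> [[x_i0 ->]|].
    by rewrite andbT -(partition_uniq partP x_i0 x_i) eqxx.
  case: ifP => [/andP [/eqP <- ->] //|_ /eqP]; by rewrite eq_sym lift_max_eq.
Qed.

Lemma size_split_word r s :
  size (split_word r s) = (split_parent r == i0) && decide (s = s0).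
Proof. by rewrite /split_word /half_word; case: eqVneq => //= _; case: decide. Qed.

Lemma inb_split_parent r x : inb (split_bricks r) x -> inb (P (split_parent r)) x.
Proof. exact: inb_bext_inb. Qed.

Lemma split_bricks_partition : is_partition split_bricks.
Proof.
split=> [r|x].
  have [L supp_L] := proj1 partP (split_parent r).
  exists (s0 :: L) => s /= s_L; rewrite supp_L; last by move=> ?; apply: s_L; right.
  rewrite /split_word /half_word; case: ifP => // _.
  by case: decideP => // es; case: s_L; left.
have [i [x_i _]] := proj2 partP x.
by exists (split_index i x); split=> [|r]; rewrite (inb_split_bricks _ x_i).
Qed.

Lemma split_bricks_very_elem : very_elem P split_bricks.
Proof.
move=> i; exists (lift ord_max i), (if i == i0 then ord_max else lift ord_max i) => x.
split=> [x_i|].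
  have := proj2 (inb_split_bricks (split_index i x) x_i) erefl.
  by rewrite /split_index; case: (i == i0); case: split_bit => /=; tauto.
by case=> /inb_split_parent; case: (eqVneq i i0) => [->|_];
  rewrite ?split_parent_lift ?split_parent_max.
Qed.

Lemma split_bricks_dyadic : dyadic P -> dyadic split_bricks.
Proof. by move=> dyP; apply: dyadic_step dyP split_bricks_partition split_bricks_very_elem. Qed.
End SplitBrick.

Lemma widen_lift k (i : 'I_k) : widen_ord (leqnSn k) i = lift ord_max i.
Proof. by apply: val_inj; rewrite /= /bump leqNgt ltn_ord. Qed.

Section Refinement.
Variables (S : Type) (m : nat).

Definition refines k (P : 'I_k -> brick S m) (l : 'I_k -> S -> nat) k' (Q : 'I_k' -> brick S m) :=
  forall j, exists i u, (forall s, size (u s) = l i s) /\ Q j = bext (P i) u.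

Definition supported k (l : 'I_k -> S -> nat) (Ls : 'I_k -> seq S) :=
  forall i s, ~ List.In s (Ls i) -> l i s = 0.

Section Split.
Variables (k : nat) (P : 'I_k -> brick S m) (l : 'I_k -> S -> nat) (Ls : 'I_k -> seq S).
Variables (i0 : 'I_k) (s0 : S).
Hypothesis l_pos : 0 < l i0 s0.

Definition split_len (r : 'I_k.+1) (s : S) : nat :=
  l (split_parent i0 r) s - size (split_word i0 s0 r s).

Lemma refines_split k' (Q : 'I_k' -> brick S m) :
  refines (split_bricks P i0 s0) split_len Q -> refines P l Q.
Proof.
move=> refQ j; have [r [u [size_u ->]]] := refQ j.
exists (split_parent i0 r), (fun s => split_word i0 s0 r s ++ u s).
split=> [s|]; last exact: bext_bext.
rewrite size_cat size_u /split_len size_split_word.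
case: eqVneq => [->|_] /=; last lia.
by case: decideP => [->|_] /=; lia.
Qed.

(* The measure [sum_i 3 ^ (total length of l i)] decreases: one brick of total
   length [a + 1] is replaced by two of total length [a], and [2 * 3 ^ a < 3 ^ (a + 1)]. *)
Definition refinement_measure k (l : 'I_k -> S -> nat) (Ls : 'I_k -> seq S) :=
  \sum_(i < k) 3 ^ (\sum_(s <- Ls i) l i s).

Lemma refinement_measure_split : List.In s0 (Ls i0) ->
  refinement_measure split_len (fun r => Ls (split_parent i0 r)) < refinement_measure l Ls.
Proof.
move=> s0_L; pose lh s := l i0 s - decide (s = s0).
have lt_h : \sum_(s <- Ls i0) lh s < \sum_(s <- Ls i0) l i0 s.
  by apply: (ltn_sum_In _ _ s0_L) => [s|]; rewrite /lh ?leq_subr ?decide_refl //; lia.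
have len_lift i :
    \sum_(s <- Ls (split_parent i0 (widen_ord (leqnSn k) i))) split_len (widen_ord (leqnSn k) i) s =
    if i == i0 then \sum_(s <- Ls i0) lh s else \sum_(s <- Ls i) l i s.
  rewrite widen_lift split_parent_lift /split_len.
  by case: eqVneq => [->|ne_i]; apply: eq_bigr => s _;
    rewrite size_split_word split_parent_lift ?eqxx ?(negbTE ne_i) ?subn0.
have len_max : \sum_(s <- Ls (split_parent i0 ord_max)) split_len ord_max s = \sum_(s <- Ls i0) lh s.
  by rewrite split_parent_max; apply: eq_bigr => s _; rewrite /split_len size_split_word split_parent_max eqxx.
rewrite /refinement_measure big_ord_recr /= len_max.
under eq_bigr do rewrite len_lift.
rewrite (bigD1 i0) //= [X in _ < X](bigD1 i0) //= eqxx.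
rewrite (eq_bigr (fun i => 3 ^ \sum_(s <- Ls i) l i s)); last by move=> i /negbTE ->.
have : 3 ^ (\sum_(s <- Ls i0) lh s).+1 <= 3 ^ \sum_(s <- Ls i0) l i0 s by rewrite leq_exp2l.
rewrite expnS; lia.
Qed.
End Split.

Lemma refinement_exists k (P : 'I_k -> brick S m) l Ls : dyadic P -> supported l Ls ->
  exists k' (Q : 'I_k' -> brick S m), dyadic Q /\ refines P l Q.
Proof.
have [N] := ubnP (refinement_measure l Ls).
elim: N => // N IH in k P l Ls *; rewrite ltnS => le_mu dyP supp_l.
have [[i0 [s0 l_pos]]|l0] := classic (exists i s, 0 < l i s); last first.
  exists k, P; split=> // j; exists j, (fun _ => [::]); split; last by rewrite bext_nil.
  by move=> s; apply/esym/eqP; rewrite eqn0Ngt; apply/negP => l_pos; apply: l0; exists j, s.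
have s0_L : List.In s0 (Ls i0) by apply: NNPP => /supp_l l0; rewrite l0 in l_pos.
have [|||k' [Q [dyQ refQ]]] := IH _ (split_bricks P i0 s0) (split_len l i0 s0) (fun r => Ls (split_parent i0 r)).
- exact: leq_trans (refinement_measure_split l_pos s0_L) le_mu.
- exact: split_bricks_dyadic (dyadic_partition dyP) dyP.
- by move=> r s /supp_l; rewrite /split_len => ->; rewrite sub0n.
by exists k', Q; split=> //; apply: refines_split refQ.
Qed.

Lemma refines_dyadic kD (D : 'I_kD -> brick S m) l Ls k (Q : 'I_k -> brick S m) :
  dyadic D -> supported l Ls -> is_partition Q -> refines D l Q -> dyadic Q.
Proof.
move=> dyD supp_l partQ refQ.
(* Both [Q] and the dyadic refinement [Q'] consist of the bricks of [D] cut to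
   depth [l], so [Q] is just a re-indexing of [Q']. *)
have [k' [Q' [dyQ' refQ']]] := refinement_exists dyD supp_l.
apply: (dyadic_step dyQ' partQ) => a.
have x_a := inb_brick_point (Q' a); set x := brick_point _ in x_a.
have [j [x_j _]] := proj2 partQ x.
suff -> : Q' a = Q j by exists j, j => y; split; [left|case].
have [b [u [size_u eQ'a]]] := refQ' a; have [b' [u' [size_u' eQj]]] := refQ j.
have eb : b = b'.
  apply: (partition_uniq (dyadic_partition dyD) (x := x)).
    by move: x_a; rewrite eQ'a => /inb_bext_inb.
  by move: x_j; rewrite eQj => /inb_bext_inb.
apply: brick_eq_size x_a x_j _ => s.
by rewrite eQ'a eQj /= !size_cat size_u size_u' eb.
Qed.

Lemma refines_cubes_size l k (Q : 'I_k -> brick S m) j s :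
  refines (cubes S m) (fun _ => l) Q -> size (bword (Q j) s) = l s.
Proof. by move=> /(_ j) [c [u [size_u ->]]]; rewrite /= size_u. Qed.
End Refinement.

Section Forests.
Variables (S : Type) (m k : nat) (P : 'I_k -> brick S m) (partP : is_partition P).

Definition forest_map (x : pt S m) : pt S k :=
  (part_index partP x, Phiinv (bword (P (part_index partP x))) x.2).

Definition forest_inv (y : pt S k) : pt S m := (bcube (P y.1), Phi (bword (P y.1)) y.2).

Lemma forest_mapE i x : inb (P i) x -> forest_map x = (i, Phiinv (bword (P i)) x.2).
Proof. by move=> x_i; rewrite /forest_map (part_indexE partP x_i). Qed.

Lemma forest_map_forest : dyadic P -> forest forest_map.
Proof. by move=> dyP; exists P; split=> // i x /forest_mapE. Qed.

Lemma forest_mapK : cancel forest_map forest_inv.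
Proof. by move=> x; apply: PhiinvK; apply: part_indexP. Qed.

Lemma forest_invK : cancel forest_inv forest_map.
Proof. by case=> i w; rewrite /forest_inv (forest_mapE (inb_Phi _ _)) PhiK. Qed.
End Forests.

Lemma forest_inv_unique (S : Type) m k (f : pt S m -> pt S k) finv (P : 'I_k -> brick S m) :
  (forall i x, inb (P i) x -> f x = (i, Phiinv (bword (P i)) x.2)) -> cancel f finv ->
  forall i w, finv (i, w) = (bcube (P i), Phi (bword (P i)) w).
Proof. by move=> f_P fK i w; have := f_P i _ (inb_Phi (P i) w); rewrite PhiK => <-. Qed.

Definition forest_decomposition (S : Type) (G : sperm S -> Prop) m n (h : pt S m -> pt S n) :=
  exists (k : nat) (f1 : pt S m -> pt S k) (f2 : pt S n -> pt S k)
    (f2inv : pt S k -> pt S n) (t : pt S k -> pt S k),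
  forest f1 /\ forest f2 /\ cancel f2 f2inv /\ cancel f2inv f2 /\
  is_Gtwist G t /\ forall x, h x = f2inv (t (f1 x)).

Definition sperm_inv (S : Type) (g : sperm S) : sperm S := SPerm (pinvK g) (pfunK g).

Section Decomposition.
Variables (S : Type) (G : sperm S -> Prop) (m n : nat) (h : pt S m -> pt S n).
Variables (k0 : nat) (B : 'I_k0 -> brick S m) (B' : 'I_k0 -> brick S n) (g : 'I_k0 -> sperm S).
Hypotheses (partB : is_partition B) (partB' : is_partition B') (G_g : forall i, G (g i))
  (h_twist : forall i x, inb (B i) x -> h x = twist (B i) (B' i) (g i) x).
Variables (T T' : seq S) (M : nat).
Hypotheses (supp_B' : forall i s, ~ List.In s T -> bword (B' i) s = [::])
  (T'_pinv : forall i s, List.In s T -> List.In (pinv (g i) s) T')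
  (size_B : forall i s, size (bword (B i) s) <= M)
  (size_B' : forall i s, size (bword (B' i) s) <= M)
  (supp_B : forall i s, ~ List.In s T' -> bword (B i) s = [::]).

Definition lenD (s : S) : nat := if decide (List.In s T) then M else 0.

(* On [T'], which contains the preimages of [T], the depth [M + M] exceeds that of
   [B] by at least [M]; hence the twisted images of the bricks of [E] reach depth
   [lenD] (see [lenD_le_image_len]). *)
Definition lenE (s : S) : nat := if decide (List.In s T') then M + M else 0.

Lemma size_B'_lenD i s : size (bword (B' i) s) <= lenD s.
Proof. by rewrite /lenD; case: decideP => [_|/supp_B' ->]. Qed.

Lemma size_B_lenE i s : size (bword (B i) s) <= lenE s.
Proof. by rewrite /lenE; case: decideP => [_|/supp_B -> //]; apply: leq_trans (leq_addl M M). Qed.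

Definition image_len i s :=
  size (bword (B' i) s) + (lenE (pinv (g i) s) - size (bword (B i) (pinv (g i) s))).

Lemma lenD_le_image_len i s : lenD s <= image_len i s.
Proof.
rewrite /lenD /image_len; case: decideP => // /[dup] s_T /(T'_pinv i).
by rewrite /lenE; case: decideP => // _ _; have := size_B i (pinv (g i) s); lia.
Qed.

Lemma image_len_supp i s : ~ List.In s (T ++ map (pfun (g i)) T') -> image_len i s = 0.
Proof.
move=> /List.in_app_iff s_T; rewrite /image_len supp_B'; last by move=> ?; apply: s_T; left.
rewrite /lenE; case: decideP => // /(List.in_map (pfun (g i))).
by rewrite pinvK => ?; case: s_T; right.
Qed.

Section Refined.
Variables (kE : nat) (E : 'I_kE -> brick S m) (kD : nat) (D : 'I_kD -> brick S n).
Hypotheses (dyE : dyadic E) (refE : refines (cubes S m) (fun _ => lenE) E).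
Hypotheses (dyD : dyadic D) (refD : refines (cubes S n) (fun _ => lenD) D).

Let partE := dyadic_partition dyE.
Let partD := dyadic_partition dyD.

Definition E_parent j := part_index partB (brick_point (E j)).
Definition E_tail j s := drop (size (bword (B (E_parent j)) s)) (bword (E j) s).

Lemma E_bext j : E j = bext (B (E_parent j)) (E_tail j).
Proof.
apply: brick_bext_size (part_indexP _ _) (inb_brick_point _) _ => s.
by rewrite (refines_cubes_size _ _ refE) size_B_lenE.
Qed.

Lemma inb_E_parent j x : inb (E j) x -> inb (B (E_parent j)) x.
Proof. by rewrite {1}E_bext => /inb_bext_inb. Qed.

Definition D_parent b := part_index partB' (brick_point (D b)).

Lemma inb_D_parent b x : inb (D b) x -> inb (B' (D_parent b)) x.
Proof.
have -> : D b = bext (B' (D_parent b)) (fun s => drop (size (bword (B' (D_parent b)) s)) (bword (D b) s)).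
  apply: brick_bext_size (part_indexP _ _) (inb_brick_point _) _ => s.
  by rewrite (refines_cubes_size _ _ refD) size_B'_lenD.
exact: inb_bext_inb.
Qed.

(* [F j] is the image of [E j] under the twist of the brick of [B] containing it. *)
Definition F j := bext (B' (E_parent j)) (fun s => E_tail j (pinv (g (E_parent j)) s)).

Lemma inb_F_parent j x : inb (F j) x -> inb (B' (E_parent j)) x.
Proof. exact: inb_bext_inb. Qed.

Lemma inb_F j x : inb (B' (E_parent j)) x ->
  inb (F j) x <-> inb (E j) (twist (B' (E_parent j)) (B (E_parent j)) (sperm_inv (g (E_parent j))) x).
Proof.
move=> x_B'; rewrite [E j]E_bext /F !inb_bext; set i := E_parent j.
split=> [[_ pre_x]|[_ pre_y]].
  split=> [|s]; first exact: inb_twist.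
  by rewrite /= /Phi /tau /Phiinv /= wconcatK; have := pre_x (pfun (g i) s); rewrite pfunK.
split=> // s; have := pre_y (pinv (g i) s); by rewrite /= /Phi /tau /Phiinv /= wconcatK pinvK.
Qed.

Lemma h_twist_E j x : inb (E j) x -> h x = twist (E j) (F j) (g (E_parent j)) x.
Proof.
move=> x_E; rewrite (h_twist (inb_E_parent x_E)) /twist /F /=; congr pair.
apply: functional_extensionality => s; rewrite /Phi /tau /Phiinv wconcat_cat; congr wconcat.
set r := pinv (g (E_parent j)) s.
have := x_E; rewrite {1}E_bext => /inb_bext [_ /(_ r) pre_x].
by rewrite E_bext /= wunprefix_cat wunprefixK.
Qed.

Lemma size_F j s : size (bword (F j) s) = image_len (E_parent j) s.
Proof. by rewrite /= size_cat size_drop (refines_cubes_size _ _ refE). Qed.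

Lemma F_partition : is_partition F.
Proof.
split=> [j|x].
  by exists (T ++ map (pfun (g (E_parent j))) T') => s /image_len_supp;
    rewrite -size_F => /eqP; rewrite size_eq0 => /eqP.
set i := part_index partB' x; have x_i : inb (B' i) x := part_indexP partB' x.
set y := twist (B' i) (B i) (sperm_inv (g i)) x.
set j := part_index partE y; have y_j : inb (E j) y := part_indexP partE y.
have ej : E_parent j = i := partition_uniq partB (inb_E_parent y_j) (inb_twist _ _ _ _).
have x_j : inb (B' (E_parent j)) x by rewrite ej.
exists j; split=> [|j' x_j']; first by apply/(inb_F x_j); rewrite ej.
have ej' : E_parent j' = i := partition_uniq partB' (inb_F_parent x_j') x_i.
have := proj1 (inb_F (inb_F_parent x_j')) x_j'; rewrite ej' => y_j'.
exact: partition_uniq partE y_j y_j'.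
Qed.

Definition lenF_over_D b s := image_len (D_parent b) s - lenD s.

Lemma F_refines_D : refines D lenF_over_D F.
Proof.
move=> j; have x_F := inb_brick_point (F j); set x := brick_point _ in x_F.
set b := part_index partD x; have x_D : inb (D b) x := part_indexP partD x.
have eb : D_parent b = E_parent j := partition_uniq partB' (inb_D_parent x_D) (inb_F_parent x_F).
exists b, (fun s => drop (size (bword (D b) s)) (bword (F j) s)); split=> [s|].
  by rewrite size_drop size_F (refines_cubes_size _ _ refD) /lenF_over_D eb.
apply: brick_bext_size x_D x_F _ => s.
by rewrite size_F (refines_cubes_size _ _ refD) lenD_le_image_len.
Qed.

Lemma F_dyadic : dyadic F.
Proof.
apply: (refines_dyadic (Ls := fun b => T ++ map (pfun (g (D_parent b))) T')) dyD _ F_partition F_refines_D.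
by move=> b s /image_len_supp supp_s; rewrite /lenF_over_D supp_s.
Qed.

Lemma decomposition_of_refinements : forest_decomposition G h.
Proof.
exists kE, (forest_map partE), (forest_map F_partition), (forest_inv F),
  (fun y => (y.1, tau (g (E_parent y.1)) y.2)).
split; first exact: forest_map_forest dyE.
split; first exact: forest_map_forest F_dyadic.
split; first exact: forest_mapK.
split; first exact: forest_invK.
split; first by exists (fun j => g (E_parent j)).
move=> x; have x_E := part_indexP partE x.
by rewrite (h_twist_E x_E) (forest_mapE _ x_E).
Qed.
End Refined.

Lemma decomposition_of_bounds : forest_decomposition G h.
Proof.
have suppE : supported (fun _ : 'I_m => lenE) (fun _ => T') by move=> _ s; rewrite /lenE; case: decideP.
have suppD : supported (fun _ : 'I_n => lenD) (fun _ => T) by move=> _ s; rewrite /lenD; case: decideP.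
have [kE [E [dyE refE]]] := refinement_exists (cubes_dyadic S m) suppE.
have [kD [D [dyD refD]]] := refinement_exists (cubes_dyadic S n) suppD.
exact: decomposition_of_refinements dyE refE dyD refD.
Qed.
End Decomposition.

Lemma finsupp_family_bound (S : Type) (I : finType) (w : I -> S -> seq bool) :
  (forall i, finsupp (w i)) -> exists (L : seq S) (M : nat),
    forall i s, (~ List.In s L -> w i s = [::]) /\ size (w i s) <= M.
Proof.
move=> supp_w.
suff [L [M LM]] : exists L M, forall i, i \in enum I -> forall s,
    (~ List.In s L -> w i s = [::]) /\ size (w i s) <= M.
  by exists L, M => i; apply: LM; rewrite mem_enum.
elim: (enum I) => [|a r [L [M LM]]]; first by exists [::], 0.
have [La supp_a] := supp_w a.
exists (La ++ L), (\sum_(s <- La) size (w a s) + M) => i.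
rewrite in_cons => /orP [/eqP -> s|/LM LM_i s]; last first.
  have [supp_i size_i] := LM_i s.
  split=> [s_L|]; first by apply: supp_i => ?; apply: s_L; apply/List.in_app_iff; right.
  exact: leq_trans size_i (leq_addl _ _).
split=> [s_L|]; first by apply: supp_a => ?; apply: s_L; apply/List.in_app_iff; left.
have [s_La|/supp_a -> //] := classic (List.In s La).
exact: leq_trans (leq_sum_In (fun s => size (w a s)) s_La) (leq_addr _ _).
Qed.

Lemma SVG_decomposition (S : Type) (G : sperm S -> Prop) m n (h : pt S m -> pt S n) :
  SVG G h -> forest_decomposition G h.
Proof.
case=> k0 [B [B' [g [partB [partB' [G_g h_twist]]]]]].
have [T [MB' supp_B']] := finsupp_family_bound (proj1 partB').
have [T0 [MB supp_B]] := finsupp_family_bound (proj1 partB).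
pose T' := T0 ++ List.flat_map (fun i => map (pinv (g i)) T) (enum 'I_k0).
apply: (decomposition_of_bounds (T := T) (T' := T') (M := maxn MB MB') partB partB' G_g h_twist).
- by move=> i s /(supp_B' i s).1.
- move=> i s s_T; apply/List.in_app_iff; right; apply/List.in_flat_map.
  by exists i; split; [apply: In_enum|apply: List.in_map].
- by move=> i s; apply: leq_trans (supp_B i s).2 (leq_maxl _ _).
- by move=> i s; apply: leq_trans (supp_B' i s).2 (leq_maxr _ _).
- by move=> i s s_T'; apply: (supp_B i s).1 => s_T0; apply: s_T'; apply/List.in_app_iff; left.
Qed.

Definition flip_bit (c : cantor) (p : nat) : cantor := fun q => if q == p then ~~ c p else c q.

Lemma prefix_flip_bit w c p : size w <= p -> Defs.prefix w c -> Defs.prefix w (flip_bit c p).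
Proof.
move=> le_wp pre_wc q lt_q; rewrite /flip_bit ifN ?pre_wc //.
by apply: contraTneq lt_q => ->; rewrite -leqNgt.
Qed.

Lemma twist_at (S : Type) m n (B : brick S m) (B' : brick S n) g x s q :
  (twist B B' g x).2 s (size (bword B' s) + q) = x.2 (pinv g s) (q + size (bword B (pinv g s))).
Proof. by rewrite /twist /= /Phi /wconcat ltnNge leq_addr /= addKn. Qed.

Lemma pinv_id (S : Type) (e : sperm S) : (forall s, pfun e s = s) -> forall s, pinv e s = s.
Proof. by move=> e_id s; rewrite -{2}(pinvK e s) e_id. Qed.

Section SVMaps.
Variables (S : Type) (m n : nat) (h : pt S m -> pt S n).

Lemma SV_local : SV h -> forall x, exists C : brick S m, inb C x /\
  forall x' s, inb C x' -> x'.2 s = x.2 s -> (h x').2 s = (h x).2 s.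
Proof.
case=> k [C [C' [e [partC [_ [e_id h_e]]]]]] x.
have [j [x_j _]] := proj2 partC x.
exists (C j); split=> // x' s x'_j eq_s.
by rewrite (h_e _ _ x'_j) (h_e _ _ x_j) /twist /= /Phi /tau /Phiinv pinv_id ?eq_s.
Qed.

Lemma SV_twist_trivial (B : brick S m) (B' : brick S n) g :
  SV h -> (forall x, inb B x -> h x = twist B B' g x) -> forall s, pinv g s = s.
Proof.
move=> SV_h h_B s; apply: NNPP => ne; set s' := pinv g s in ne.
have x0_B := inb_brick_point B; set x0 := brick_point B in x0_B.
have [C [x0_C C_loc]] := SV_local SV_h x0.
(* Flip a bit of coordinate [s'] lying below both [B] and [C]. *)
set p := size (bword C s') + size (bword B s').
pose x1 : pt S m := (x0.1, fun r => if decide (r = s') then flip_bit (x0.2 r) p else x0.2 r).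
have agree w r : (r = s' -> size w <= p) -> Defs.prefix w (x0.2 r) -> Defs.prefix w (x1.2 r).
  by move=> le_wp pre_w; rewrite /x1 /=; case: decideP => // /le_wp /prefix_flip_bit; apply.
have x1_B : inb B x1.
  by case: x0_B => cube_x0 pre_x0; split=> // r; apply: agree (pre_x0 r) => ->; rewrite leq_addl.
have x1_C : inb C x1.
  by case: x0_C => cube_x0 pre_x0; split=> // r; apply: agree (pre_x0 r) => ->; rewrite leq_addr.
have := C_loc x1 s x1_C; rewrite /x1 /=; case: decideP => [/esym //|_ /(_ erefl)].
rewrite (h_B _ x1_B) (h_B _ x0_B) => /(congr1 (fun c => c (size (bword B' s) + size (bword C s')))).
rewrite !twist_at -/s' -/p /x1 /= decide_refl /flip_bit eqxx.
by case: (Phi _ _ _ _).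
Qed.
End SVMaps.

Definition sperm_id (S : Type) : sperm S := @SPerm S id id (fun _ => erefl) (fun _ => erefl).

Lemma SV_iff_twist_id (S : Type) (G : sperm S -> Prop) m n (h : pt S m -> pt S n) k
    (f1 : pt S m -> pt S k) (f2 : pt S n -> pt S k) (f2inv : pt S k -> pt S n) (t : pt S k -> pt S k) :
  forest f1 -> forest f2 -> cancel f2 f2inv -> is_Gtwist G t ->
  (forall x, h x = f2inv (t (f1 x))) -> (SV h <-> forall y, t y = y).
Proof.
move=> [B1 [dy1 f1_B1]] [B2 [dy2 f2_B2]] f2K [g [_ t_g]] h_eq.
have h_B1 i x : inb (B1 i) x -> h x = twist (B1 i) (B2 i) (g i) x.
  by move=> x_i; rewrite h_eq (f1_B1 _ _ x_i) t_g /= (forest_inv_unique f2_B2 f2K).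
split=> [SV_h [i z]|t_id].
  rewrite t_g; congr pair; apply: functional_extensionality => s.
  by rewrite /tau (SV_twist_trivial SV_h (h_B1 i)).
exists k, B1, B2, (fun _ => sperm_id S).
split; first exact: dyadic_partition dy1.
split; first exact: dyadic_partition dy2.
split=> // i x x_i; rewrite (h_B1 _ _ x_i) /twist; congr (_, Phi _ _).
by have := t_g (i, Phiinv (bword (B1 i)) x.2); rewrite t_id => -[<-].
Qed.

Theorem lemma2p2 (S : Type) (HS : inhabited S) (G : sperm S -> Prop) (HG : is_subgroup G)
  (m n : nat) (Hm : 0 < m) (Hn : 0 < n) (h : pt S m -> pt S n) :
  SVG G h ->
  (exists (k : nat) (f1 : pt S m -> pt S k) (f2 : pt S n -> pt S k)
          (f2inv : pt S k -> pt S n) (t : pt S k -> pt S k),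
      forest f1 /\ forest f2 /\ cancel f2 f2inv /\ cancel f2inv f2 /\
      is_Gtwist G t /\ forall x, h x = f2inv (t (f1 x))) /\
  (forall (k : nat) (f1 : pt S m -> pt S k) (f2 : pt S n -> pt S k)
          (f2inv : pt S k -> pt S n) (t : pt S k -> pt S k),
      forest f1 -> forest f2 -> cancel f2 f2inv -> cancel f2inv f2 ->
      is_Gtwist G t -> (forall x, h x = f2inv (t (f1 x))) ->
      (SV h <-> forall y, t y = y)).
Proof.
move=> SVG_h; split; first exact: SVG_decomposition.
move=> k f1 f2 f2inv t forest_f1 forest_f2 f2K _.
exact: SV_iff_twist_id forest_f1 forest_f2 f2K.
Qed.
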